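(* Let $A,B\in L(\mathbb{R}^n,\mathbb{R}^n)$ be symmetric, let $I\subset\mathbb{R}$ be a non-empty open interval, and let $E:I\to L(\mathbb{R}^{n-m},\mathbb{R}^n)$ be differentiable with $E(t)$ injective for every $t\in I$. Suppose there is a differentiable $\mu:I\to\mathbb{R}$ with ${}^tE(t)BE(t)=\mu(t)\,{}^tE(t)AE(t)$ for every $t\in I$. If $\operatorname{rank}A>4m$, then $\mu$ is constant. *)

From HB Require Import structures.
From mathcomp Require Import all_boot all_order all_algebra.
From mathcomp Require Import all_classical all_reals all_analysis.
Set Implicit Arguments. Unset Strict Implicit. Unset Printing Implicit Defensive.
Import Order.TTheory GRing.Theory Num.Theory.
Import numFieldNormedType.Exports.

(** Put [C := B - mu(t) A]. Differentiating [E^T B E = mu E^T A E] at [t] gives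
    [D^T C E + E^T C D = mu'(t) E^T A E] with [D := E'(t)], while [E^T C E = 0].
    The latter forces [rank (C E) <= m] because [E] has rank [n - m]; hence the
    left-hand side has rank at most [2m].  By Sylvester's inequality,
    [rank (E^T A E) >= rank A - 2m > 2m], so [mu'(t) = 0] everywhere on [I], and
    [mu] is constant by the mean value theorem. *)
From HB Require Import structures.
From mathcomp Require Import all_boot all_order all_algebra.
From mathcomp Require Import all_classical all_reals all_analysis.
From mathcomp Require Import zify.
Set Implicit Arguments.
Unset Strict Implicit.
Unset Printing Implicit Defensive.
Import Order.TTheory GRing.Theory Num.Theory.
Import numFieldNormedType.Exports.
Local Open Scope classical_set_scope.
Local Open Scope ring_scope.

Section RankBounds.
Variable F : fieldType.

Lemma mxrank_inj_mulmx n k (e : 'M[F]_(n, k)) :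
  injective (fun v : 'cV[F]_k => e *m v) -> \rank e = k.
Proof.
move=> e_inj; rewrite -mxrank_tr; apply/eqP/inj_row_free => v ve0.
apply: trmx_inj; rewrite trmx0; apply: e_inj.
by rewrite mulmx0 -[e]trmxK -trmx_mul ve0 trmx0.
Qed.

Lemma mxrank_annihilated n k p (e : 'M[F]_(n, k)) (M : 'M[F]_(n, p)) :
  e^T *m M = 0 -> (\rank M <= n - \rank e)%N.
Proof.
move=> eM0; have := mxrank_mul_min e^T M.
by rewrite eM0 mxrank0 mxrank_tr; lia.
Qed.

Lemma mxrank_congruence_ge n k (A : 'M[F]_n) (e : 'M[F]_(n, k)) :
  (\rank A + 2 * \rank e <= \rank (e^T *m A *m e) + 2 * n)%N.
Proof.
have Ae := mxrank_mul_min A e.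
have eAe := mxrank_mul_min e^T (A *m e).
rewrite mxrank_tr mulmxA in eAe.
move: Ae eAe; move: (\rank (A *m e)) (\rank (e^T *m A *m e)) => r s.
lia.
Qed.

Lemma mxrank_le_derived_pencil n k (A C : 'M[F]_n) (e D : 'M[F]_(n, k)) c :
  \rank e = k -> C^T = C -> e^T *m C *m e = 0 ->
  c *: (e^T *m A *m e) = D^T *m C *m e + e^T *m C *m D -> c != 0 ->
  (\rank A <= 4 * (n - k))%N.
Proof.
move=> re CT eCe0 eAe c0.
have rCe : (\rank (C *m e) <= n - k)%N.
  by have := @mxrank_annihilated _ _ _ e (C *m e); rewrite re mulmxA; exact.
have rDCe : (\rank (D^T *m C *m e) <= n - k)%N.
  by rewrite -mulmxA (leq_trans (mxrankM_maxr _ _)).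
have reCD : (\rank (e^T *m C *m D) <= n - k)%N.
  by rewrite -mxrank_tr !trmx_mul trmxK CT (leq_trans (mxrankM_maxr _ _)).
have reAe : (\rank (e^T *m A *m e) <= 2 * (n - k))%N.
  rewrite -(mxrank_scale_nz _ c0) eAe (leq_trans (mxrank_add _ _)) //; lia.
have := mxrank_congruence_ge A e; have := rank_leq_row e.
by rewrite re; lia.
Qed.

End RankBounds.

Section PencilDerivative.
Variable R : realType.

Lemma is_derive_mulmx a b c (f : R -> 'M[R]_(a, b)) (g : R -> 'M[R]_(b, c))
    (t : R) (df : 'M[R]_(a, b)) (dg : 'M[R]_(b, c)) :
  (forall i j, is_derive t 1 (fun s => f s i j) (df i j)) ->
  (forall i j, is_derive t 1 (fun s => g s i j) (dg i j)) ->
  forall i k, is_derive t 1 (fun s => (f s *m g s) i k) ((df *m g t + f t *m dg) i k).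
Proof.
move=> hf hg i k.
have -> : (fun s => (f s *m g s) i k) =
    \sum_(j < b) ((fun s => f s i j) * (fun s => g s j k)).
  by apply/funext => s; rewrite fct_sumE mxE.
apply: is_derive_eq.
rewrite !mxE big_split /= addrC; congr (_ + _); apply: eq_bigr => j _.
by rewrite mulrC.
Qed.

Lemma is_derive_congruence n k (M : 'M[R]_n) (E : R -> 'M[R]_(n, k)) (t : R)
    (D : 'M[R]_(n, k)) :
  (forall i j, is_derive t 1 (fun s => E s i j) (D i j)) ->
  forall p q, is_derive t 1 (fun s => ((E s)^T *m M *m E s) p q)
                            ((D^T *m M *m E t + (E t)^T *m M *m D) p q).
Proof.
move=> dE p q.
have dET i j : is_derive t 1 (fun s => (E s)^T i j) (D^T i j).
  under eq_fun do rewrite mxE.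
  by rewrite mxE.
have dM i j : is_derive t 1 (fun=> M i j) ((0 : 'M[R]_n) i j).
  by rewrite mxE; exact: is_derive_cst.
apply: is_derive_eq (is_derive_mulmx (is_derive_mulmx dET dM) dE p q) _.
by rewrite mulmx0 addr0.
Qed.

Lemma derive_pencil_identity n k (A B : 'M[R]_n) (E : R -> 'M[R]_(n, k))
    (mu : R -> R) (t : R) :
  derivable E t 1 -> derivable mu t 1 ->
  (\forall s \near t, (E s)^T *m B *m E s = mu s *: ((E s)^T *m A *m E s)) ->
  let C := B - mu t *: A in let D := 'D_1 E t in
  D^T *m C *m E t + (E t)^T *m C *m D = 'D_1 mu t *: ((E t)^T *m A *m E t).
Proof.
move=> dE /derivableP dmu near_eq C D.
have dEij i j : is_derive t 1 (fun s => E s i j) (D i j).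
  rewrite /D derive_mx // mxE; apply: derivableP.
  exact: (derivable_mxP _ _ _).1 dE i j.
have dBeq : D^T *m B *m E t + (E t)^T *m B *m D =
    mu t *: (D^T *m A *m E t + (E t)^T *m A *m D) +
    'D_1 mu t *: ((E t)^T *m A *m E t).
  apply/matrixP => p q; have [_ <-] := is_derive_congruence B dEij p q.
  suff [_ ->] : is_derive t 1 (fun s => ((E s)^T *m B *m E s) p q)
    ((mu t *: (D^T *m A *m E t + (E t)^T *m A *m D) +
      'D_1 mu t *: ((E t)^T *m A *m E t)) p q) by [].
  apply: (near_eq_is_derive (f := mu * (fun s => ((E s)^T *m A *m E s) p q))).
    by apply: filterS near_eq => s /= ->; rewrite mxE.
  (* [dmu] and [dA] are picked up by instance resolution in the product rule. *)
  have dA := is_derive_congruence A dEij p q.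
  apply: is_derive_eq; rewrite [RHS]mxE; congr (_ + _); rewrite [RHS]mxE //.
  by rewrite mulrC.
rewrite /C !(mulmxBr, mulmxBl) -!scalemxAr -!scalemxAl.
by rewrite addrACA -opprD -scalerDr dBeq addrC addKr.
Qed.

Lemma pencil_eigenvalue_derive_eq0 n k (A B : 'M[R]_n) (E : R -> 'M[R]_(n, k))
    (mu : R -> R) (t : R) :
  A^T = A -> B^T = B -> (4 * (n - k) < \rank A)%N ->
  derivable E t 1 -> injective (fun v : 'cV[R]_k => E t *m v) ->
  derivable mu t 1 ->
  (\forall s \near t, (E s)^T *m B *m E s = mu s *: ((E s)^T *m A *m E s)) ->
  'D_1 mu t = 0.
Proof.
move=> AT BT rA dE injE dmu near_eq; apply/eqP; apply: contraTT rA => d0.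
rewrite -leqNgt.
apply: (mxrank_le_derived_pencil (mxrank_inj_mulmx injE) _ _
  (esym (derive_pencil_identity dE dmu near_eq)) d0).
- by rewrite linearB linearZ /= AT BT.
- rewrite mulmxBr mulmxBl -scalemxAr -scalemxAl (nbhs_singleton near_eq).
  by rewrite subrr.
Qed.

Lemma interval_derive_eq0_cst (f : R -> R) (I : set R) :
  is_interval I -> (forall t, I t -> derivable f t 1) ->
  (forall t, I t -> 'D_1 f t = 0) -> forall s t, I s -> I t -> f s = f t.
Proof.
move=> iI df df0 s t Is It.
wlog st : s t Is It / s <= t.
  by move=> h; case: (leP s t) => [|/ltW ts]; [exact: h | rewrite (h t s)].
have Ist x : s <= x <= t -> I x by exact: iI.
have dfst x : x \in `]s, t[ -> is_derive x 1 f ('D_1 f x).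
  by rewrite in_itv => /andP[xs xt]; apply/derivableP/df/Ist; rewrite !ltW.
have cfst : {within `[s, t], continuous f}.
  by apply: derivable_within_continuous => x; rewrite in_itv => /Ist/df.
have [c cst fts] := MVT_segment st dfst cfst.
have Ic : I c by apply: Ist; rewrite in_itv in cst.
by apply/eqP; rewrite eq_sym -subr_eq0 fts df0 // mul0r.
Qed.

End PencilDerivative.

Theorem lemma3p3 (R : realType) (n m : nat) (A B : 'M[R]_n)
  (I : set R) (E : R -> 'M[R]_(n, n - m)) (mu : R -> R) :
  A^T = A -> B^T = B ->
  open I -> is_interval I -> I !=set0 ->
  (forall t, I t -> derivable E t 1) ->
  (forall t, I t -> injective (fun v : 'cV[R]_(n - m) => E t *m v)) ->
  (forall t, I t -> derivable mu t 1) ->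
  (forall t, I t -> (E t)^T *m B *m E t = mu t *: ((E t)^T *m A *m E t)) ->
  (4 * m < \rank A)%N ->
  forall s t, I s -> I t -> mu s = mu t.
Proof.
move=> AT BT oI iI _ dE injE dmu eqI rA.
have rA' : (4 * (n - (n - m)) < \rank A)%N.
  by apply: leq_ltn_trans rA; rewrite leq_mul2l leq_subLR addnC -leq_subLR leqnn orbT.
apply: interval_derive_eq0_cst => // t It.
apply: (pencil_eigenvalue_derive_eq0 AT BT rA' (dE t It) (injE t It) (dmu t It)).
by apply: filterS (open_nbhs_nbhs (conj oI It)); exact: eqI.
Qed.
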